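(* Let $A$ be an AUF algebra and let $G$ be a projective generator of $\mathrm{Coh}_{\mathrm L}(A)$. Let $M$ be a left $A$-module. The following are equivalent: (1) $M$ is coherent and is a projective generator of $\mathrm{Coh}_{\mathrm L}(A)$; (2) there exist $n\in\mathbb Z_+$ and a generating idempotent $p$ of $B:=\mathrm{End}_{A,-}(G^{\oplus n})^{\mathrm{op}}$ such that $M\simeq G^{\oplus n}\cdot p$.
   Context: All algebras are associative $\mathbb C$-algebras, not necessarily unital. An idempotent is $e$ with $e^2=e$. An algebra $A$ is AUF if there is a family $(e_i)_{i\in\mathfrak I}$ of mutually orthogonal idempotents with $\dim e_iAe_j<\infty$ and $A=\sum_{i,j}e_iAe_j$. A left $A$-module is quasicoherent if $\xi\in A\xi$ for all $\xi$, coherent if moreover finitely generated; $\mathrm{Coh}_{\mathrm L}(A)$ is the category of coherent left $A$-modules. A projective generator of $\mathrm{Coh}_{\mathrm L}(A)$ is a coherent module, projective as a left $A$-module, such that every coherent left $A$-module is a quotient of a finite direct sum of copies of it. $B=\mathrm{End}_{A,-}(G^{\oplus n})^{\mathrm{op}}$ (a finite-dimensional unital algebra) acts on $G^{\oplus n}$ on the right by $\xi\cdot T=T(\xi)$, and $G^{\oplus n}\cdot p=\{\xi p\}$. Irreducible means nonzero with no nonzero proper submodules; for a finite-dimensional unital algebra $B$, an idempotent $p$ is generating if every irreducible left $B$-module on which $1_B$ acts as identity is a quotient of $Bp$. *)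

From mathcomp Require Import all_boot all_algebra.
From mathcomp Require Import Rstruct complex.
Set Implicit Arguments. Unset Strict Implicit. Unset Printing Implicit Defensive.
Import GRing.Theory.
Local Open Scope ring_scope.

Definition CC : fieldType := Rdefinitions.R[i].

Section Defs.

Definition is_nualg (A : lmodType CC) (mul : A -> A -> A) : Prop :=
  [/\ forall a b c, mul a (mul b c) = mul (mul a b) c,
      forall (k : CC) x y z, mul (k *: x + y) z = k *: mul x z + mul y z &
      forall (k : CC) x y z, mul z (k *: x + y) = k *: mul z x + mul z y].

Definition is_AUF (A : lmodType CC) (mul : A -> A -> A) : Prop :=
  exists (I : Type) (e : I -> A),
    [/\ forall i, mul (e i) (e i) = e i,
        forall i j, i <> j -> mul (e i) (e j) = 0,
        forall i j, exists (k : nat) (s : 'I_k -> A),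
          forall a, exists c : 'I_k -> CC,
            mul (mul (e i) a) (e j) = \sum_(l < k) c l *: s l &
        forall x, exists s : seq (I * I * A),
          x = \sum_(t <- s) mul (mul (e t.1.1) t.2) (e t.1.2)].

Definition is_lmodule (A : lmodType CC) (mul : A -> A -> A)
    (M : lmodType CC) (act : A -> M -> M) : Prop :=
  [/\ forall a b m, act (mul a b) m = act a (act b m),
      forall (k : CC) a b m, act (k *: a + b) m = k *: act a m + act b m &
      forall (k : CC) a m n, act a (k *: m + n) = k *: act a m + act a n].

Definition is_modmap (A : lmodType CC) (M N : lmodType CC)
    (actM : A -> M -> M) (actN : A -> N -> N) (f : M -> N) : Prop :=
  (forall (k : CC) m n, f (k *: m + n) = k *: f m + f n) /\
  (forall a m, f (actM a m) = actN a (f m)).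

Definition quasicoherent (A : lmodType CC) (M : lmodType CC)
    (act : A -> M -> M) : Prop :=
  forall m, exists a, act a m = m.

Definition fin_gen (A : lmodType CC) (M : lmodType CC)
    (act : A -> M -> M) : Prop :=
  exists (k : nat) (x : 'I_k -> M), forall m,
    exists (c : 'I_k -> CC) (a : 'I_k -> A),
      m = \sum_(l < k) (c l *: x l + act (a l) (x l)).

Definition coherent (A : lmodType CC) (M : lmodType CC)
    (act : A -> M -> M) : Prop :=
  quasicoherent act /\ fin_gen act.

Definition projective_mod (A : lmodType CC) (mul : A -> A -> A)
    (P : lmodType CC) (act : A -> P -> P) : Prop :=
  forall (X Y : lmodType CC) (actX : A -> X -> X) (actY : A -> Y -> Y),
    is_lmodule mul actX -> is_lmodule mul actY ->
    forall f : X -> Y, is_modmap actX actY f -> (forall y, exists x, f x = y) ->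
    forall g : P -> Y, is_modmap act actY g ->
    exists h : P -> X, is_modmap act actX h /\ (forall p, f (h p) = g p).

Definition dsum_act (A : lmodType CC) (G : lmodType CC) (act : A -> G -> G)
    (n : nat) : A -> {ffun 'I_n -> G} -> {ffun 'I_n -> G} :=
  fun a x => [ffun i => act a (x i)].

Definition proj_generator (A : lmodType CC) (mul : A -> A -> A)
    (G : lmodType CC) (act : A -> G -> G) : Prop :=
  [/\ coherent act, projective_mod mul act &
      forall (N : lmodType CC) (actN : A -> N -> N),
        is_lmodule mul actN -> coherent actN ->
        exists (m : nat) (f : {ffun 'I_m -> G} -> N),
          is_modmap (dsum_act act (n:=m)) actN f /\ (forall y, exists x, f x = y)].

(* Elements of B are A-module endomorphisms b of G^{+n}; the product in B is
   b1 *_B b2 = b2 \o b1 (opposite of composition); 1_B = id. *)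
Definition is_End (A : lmodType CC) (G : lmodType CC) (act : A -> G -> G)
    (n : nat) (b : {ffun 'I_n -> G} -> {ffun 'I_n -> G}) : Prop :=
  is_modmap (dsum_act act (n:=n)) (dsum_act act (n:=n)) b.

Definition is_Bmodule (A : lmodType CC) (G : lmodType CC) (act : A -> G -> G)
    (n : nat) (V : lmodType CC)
    (bact : ({ffun 'I_n -> G} -> {ffun 'I_n -> G}) -> V -> V) : Prop :=
  [/\ forall b, is_End act b ->
        forall (k : CC) v w, bact b (k *: v + w) = k *: bact b v + bact b w,
      forall b1 b2, is_End act b1 -> is_End act b2 -> forall (k : CC) v,
        bact (fun x => k *: b1 x + b2 x) v = k *: bact b1 v + bact b2 v,
      (* (b1 *_B b2) . v = b1 . (b2 . v), with b1 *_B b2 = b2 \o b1 *)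
      forall b1 b2, is_End act b1 -> is_End act b2 -> forall v,
        bact (fun x => b2 (b1 x)) v = bact b1 (bact b2 v) &
      forall v, bact id v = v].

Definition Bsubmodule (A : lmodType CC) (G : lmodType CC) (act : A -> G -> G)
    (n : nat) (V : lmodType CC)
    (bact : ({ffun 'I_n -> G} -> {ffun 'I_n -> G}) -> V -> V)
    (S : V -> Prop) : Prop :=
  [/\ S 0, forall (k : CC) v w, S v -> S w -> S (k *: v + w) &
      forall b v, is_End act b -> S v -> S (bact b v)].

Definition Birreducible (A : lmodType CC) (G : lmodType CC) (act : A -> G -> G)
    (n : nat) (V : lmodType CC)
    (bact : ({ffun 'I_n -> G} -> {ffun 'I_n -> G}) -> V -> V) : Prop :=
  (exists v : V, v <> 0) /\
  forall S : V -> Prop, Bsubmodule act bact S ->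
    (exists v, S v /\ v <> 0) -> forall v, S v.

(* the left ideal B p = { b *_B p } = { p \o b : b in B } *)
Definition in_Bp (A : lmodType CC) (G : lmodType CC) (act : A -> G -> G)
    (n : nat) (p x : {ffun 'I_n -> G} -> {ffun 'I_n -> G}) : Prop :=
  exists b, is_End act b /\ forall y, x y = p (b y).

(* V is a quotient of the left B-module Bp: there is a surjective
   B-module homomorphism phi : Bp -> V (action of b on x in Bp is
   b *_B x = x \o b). *)
Definition Bquotient_of_Bp (A : lmodType CC) (G : lmodType CC)
    (act : A -> G -> G) (n : nat) (p : {ffun 'I_n -> G} -> {ffun 'I_n -> G})
    (V : lmodType CC)
    (bact : ({ffun 'I_n -> G} -> {ffun 'I_n -> G}) -> V -> V) : Prop :=
  exists phi : ({ffun 'I_n -> G} -> {ffun 'I_n -> G}) -> V,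
    [/\ forall x y (k : CC), in_Bp act p x -> in_Bp act p y ->
          phi (fun z => k *: x z + y z) = k *: phi x + phi y,
        forall x b, in_Bp act p x -> is_End act b ->
          phi (fun z => x (b z)) = bact b (phi x) &
        forall v, exists x, in_Bp act p x /\ phi x = v].

Definition generating_idempotent (A : lmodType CC) (G : lmodType CC)
    (act : A -> G -> G) (n : nat)
    (p : {ffun 'I_n -> G} -> {ffun 'I_n -> G}) : Prop :=
  [/\ is_End act p, forall x, p (p x) = p x &
      forall (V : lmodType CC)
             (bact : ({ffun 'I_n -> G} -> {ffun 'I_n -> G}) -> V -> V),
        is_Bmodule act bact -> Birreducible act bact ->
        Bquotient_of_Bp act p bact].

End Defs.
Arguments dsum_act {A G} act n.

From HB Require Import structures.
From mathcomp Require Import all_boot all_algebra.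
From mathcomp Require Import Rstruct complex.
From mathcomp Require Import boolp classical_sets functions.
Set Implicit Arguments. Unset Strict Implicit. Unset Printing Implicit Defensive.
Import GRing.Theory.
Local Open Scope ring_scope.

(* Write B = End(G^n)^op and BpB for the two-sided ideal generated by an
   idempotent p.  The heart of the argument is that p is generating iff
   1 \in BpB.  If 1 = sum_j b_j p b'_j, then p kills no nonzero B-module, and
   for an irreducible V with p v <> 0 the orbit map x |-> x.v is a surjection
   Bp -> V.  Conversely, if 1 \notin BpB, a maximal left ideal containing BpB
   (Zorn) gives an irreducible quotient of B killed by p, which cannot be a
   quotient of Bp.
   Now M ~ G^n.p means that M is a retract of G^n with p the composite
   G^n -> M -> G^n, and 1 \in BpB holds as soon as G is a retract of some M^k,
   and forces G to be a quotient of some M^k.  A coherent projective M is a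
   retract of some G^n because G generates, and G is a retract of some M^k when
   M generates.  Conversely a retract of G^n is projective, and coherent since
   an AUF algebra has local units. *)

Section LinearFun.
Variables (U W : lmodType CC) (f : U -> W).
Hypothesis f_lin : linear f.

Lemma linear_funD x y : f (x + y) = f x + f y.
Proof. exact: (GRing.semilinear_linear f_lin).2. Qed.

Lemma linear_funZ k x : f (k *: x) = k *: f x.
Proof. exact: (GRing.semilinear_linear f_lin).1. Qed.

Lemma linear_fun0 : f 0 = 0.
Proof. by rewrite -(scale0r 0) linear_funZ scale0r. Qed.

Lemma linear_funB x y : f (x - y) = f x - f y.
Proof. by rewrite linear_funD -scaleN1r linear_funZ scaleN1r. Qed.

Lemma linear_fun_sum I r (P : pred I) (F : I -> U) :
  f (\sum_(i <- r | P i) F i) = \sum_(i <- r | P i) f (F i).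
Proof. exact: (big_morph f linear_funD linear_fun0). Qed.

End LinearFun.

Definition subspace (V : lmodType CC) (P : V -> Prop) :=
  P 0 /\ forall (k : CC) x y, P x -> P y -> P (k *: x + y).

Section Subspace.
Variables (V : lmodType CC) (P : V -> Prop).
Hypothesis P_sub : subspace P.

Lemma subspace0 : P 0. Proof. by case: P_sub. Qed.

Lemma subspaceD x y : P x -> P y -> P (x + y).
Proof. by case: P_sub => _ Plin Px Py; rewrite -[x]scale1r; apply: Plin. Qed.

Lemma subspaceZ k x : P x -> P (k *: x).
Proof. by case: P_sub => P0 Plin Px; rewrite -[_ *: _]addr0; apply: Plin. Qed.

Lemma subspaceB x y : P x -> P y -> P (x - y).
Proof. by move=> Px Py; rewrite -scaleN1r; apply: subspaceD => //; apply: subspaceZ. Qed.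

Lemma subspace_sum I r (Q : pred I) (F : I -> V) :
  (forall i, Q i -> P (F i)) -> P (\sum_(i <- r | Q i) F i).
Proof.
move=> PF; elim/big_rec: _ => [|i x Qi Px]; first exact: subspace0.
by apply: subspaceD => //; apply: PF.
Qed.

End Subspace.

Section SubspaceQuotient.
Variables (V : lmodType CC) (S L : V -> Prop).

Record nested_subspaces : Prop := NestedSubspaces {
  outer_subspace : subspace S;
  inner_subspace : subspace L;
  inner_sub_outer : forall x, L x -> S x }.

Variable SL : nested_subspaces.

Let S_sub := outer_subspace SL.
Let L_sub := inner_subspace SL.
Let SD := subspaceD S_sub.
Let SZ := subspaceZ S_sub.

Definition coset (x : V) : set V := fun y => L (y - x).

(* The dummy argument lets the structure instances below, whose proofs need
   the hypothesis, be keyed on [quot]. *)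
Definition quot (_ : nested_subspaces) := {T : set V | exists2 x, S x & T = coset x}.

HB.instance Definition _ := gen_eqMixin (quot SL).
HB.instance Definition _ := gen_choiceMixin (quot SL).

Lemma coset_eq x y : coset x = coset y <-> L (x - y).
Proof.
split=> [Exy|Lxy].
  have : coset x x by rewrite /coset subrr; apply: subspace0.
  by rewrite Exy.
apply/funext => z; apply/propext; rewrite /coset; split=> Lz.
  by have := subspaceD L_sub Lz Lxy; rewrite addrA subrK.
by have := subspaceB L_sub Lz Lxy; rewrite opprB addrA subrK.
Qed.

Definition quot_pi (x : V) : quot SL :=
  match pselect (S x) with
  | left Sx => exist _ (coset x) (ex_intro2 _ _ x Sx erefl)
  | right _ => exist _ (coset 0) (ex_intro2 _ _ 0 (subspace0 S_sub) erefl)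
  end.

Lemma quot_piE x : S x -> sval (quot_pi x) = coset x.
Proof. by rewrite /quot_pi; case: pselect. Qed.

Lemma quot_pi_eq x y : S x -> S y -> quot_pi x = quot_pi y <-> L (x - y).
Proof.
move=> Sx Sy; split=> [Exy|Lxy].
  by apply/coset_eq; rewrite -quot_piE // -[RHS]quot_piE // Exy.
apply: eq_sig_hprop => [T|]; first exact: Prop_irrelevance.
by rewrite !quot_piE //; apply/coset_eq.
Qed.

Lemma quot_surj u : exists2 x, S x & quot_pi x = u.
Proof.
case: u => T [x Sx ET]; exists x => //.
by apply: eq_sig_hprop => [T'|]; [exact: Prop_irrelevance | rewrite quot_piE].
Qed.

Definition quot_rep u := projT1 (cid2 (quot_surj u)).

Lemma quot_repS u : S (quot_rep u).
Proof. by rewrite /quot_rep; case: cid2. Qed.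

Lemma quot_repK u : quot_pi (quot_rep u) = u.
Proof. by rewrite /quot_rep; case: cid2. Qed.

Lemma quot_pi_repK x : S x -> L (quot_rep (quot_pi x) - x).
Proof. by move=> Sx; apply/(quot_pi_eq (quot_repS _) Sx); rewrite quot_repK. Qed.

Definition quot_map (T : V -> V) u := quot_pi (T (quot_rep u)).

Lemma quot_map_pi (T : V -> V) x : linear T ->
  (forall y, S y -> S (T y)) -> (forall y, L y -> L (T y)) -> S x ->
  quot_map T (quot_pi x) = quot_pi (T x).
Proof.
move=> T_lin TS TL Sx; apply/quot_pi_eq; [exact/TS/quot_repS | exact: TS |].
by rewrite -linear_funB //; apply/TL/quot_pi_repK.
Qed.

Definition quot_add u v := quot_pi (quot_rep u + quot_rep v).
Definition quot_opp u := quot_pi (- quot_rep u).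
Definition quot_scale (k : CC) u := quot_pi (k *: quot_rep u).

Lemma quot_piD x y : S x -> S y -> quot_add (quot_pi x) (quot_pi y) = quot_pi (x + y).
Proof.
move=> Sx Sy; apply/quot_pi_eq; [exact: SD (quot_repS _) (quot_repS _) | exact: SD |].
have := subspaceD L_sub (quot_pi_repK Sx) (quot_pi_repK Sy).
by rewrite opprD addrACA.
Qed.

Lemma quot_piZ k x : S x -> quot_scale k (quot_pi x) = quot_pi (k *: x).
Proof.
move=> Sx; apply/quot_pi_eq; [exact/SZ/quot_repS | exact: SZ |].
by rewrite -scalerBr; apply: (subspaceZ L_sub); apply: quot_pi_repK.
Qed.

Lemma quot_piN x : S x -> quot_opp (quot_pi x) = quot_pi (- x).
Proof. by move=> Sx; rewrite -scaleN1r -quot_piZ // /quot_opp /quot_scale scaleN1r. Qed.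

Lemma quot_addA : associative quot_add.
Proof.
move=> u v w; case: (quot_surj u) => [x Sx <-]; case: (quot_surj v) => [y Sy <-].
by case: (quot_surj w) => [z Sz <-]; rewrite !quot_piD ?addrA //; apply: SD.
Qed.

Lemma quot_addC : commutative quot_add.
Proof.
move=> u v; case: (quot_surj u) => [x Sx <-]; case: (quot_surj v) => [y Sy <-].
by rewrite !quot_piD // addrC.
Qed.

Lemma quot_add0 : left_id (quot_pi 0) quot_add.
Proof.
by move=> u; case: (quot_surj u) => [x Sx <-]; rewrite quot_piD ?add0r //; apply: subspace0.
Qed.

Lemma quot_addN : left_inverse (quot_pi 0) quot_opp quot_add.
Proof.
move=> u; case: (quot_surj u) => [x Sx <-].
by rewrite quot_piN // quot_piD ?addNr //; rewrite -scaleN1r; apply: SZ.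
Qed.

HB.instance Definition _ :=
  GRing.isZmodule.Build (quot SL) quot_addA quot_addC quot_add0 quot_addN.

Lemma quot_scaleA a b u : quot_scale a (quot_scale b u) = quot_scale (a * b) u.
Proof. by case: (quot_surj u) => [x Sx <-]; rewrite !quot_piZ ?scalerA //; apply: SZ. Qed.

Lemma quot_scale1 : left_id 1 quot_scale.
Proof. by move=> u; case: (quot_surj u) => [x Sx <-]; rewrite quot_piZ ?scale1r. Qed.

Lemma quot_scaleDr : right_distributive quot_scale +%R.
Proof.
move=> k u v; case: (quot_surj u) => [x Sx <-]; case: (quot_surj v) => [y Sy <-].
by rewrite /GRing.add /= quot_piD // !quot_piZ ?quot_piD ?scalerDr //; [apply: SZ..| apply: SD].
Qed.

Lemma quot_scaleDl u : {morph quot_scale^~ u : a b / a + b}.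
Proof.
move=> a b; case: (quot_surj u) => [x Sx <-].
by rewrite /GRing.add /= !quot_piZ ?quot_piD ?scalerDl //; apply: SZ.
Qed.

HB.instance Definition _ := GRing.Zmodule_isLmodule.Build CC (quot SL)
  quot_scaleA quot_scale1 quot_scaleDr quot_scaleDl.

Lemma quot_pi_lin (k : CC) x y : S x -> S y ->
  quot_pi (k *: x + y) = k *: quot_pi x + quot_pi y.
Proof.
by move=> Sx Sy; rewrite /GRing.add /GRing.scale /= quot_piZ // quot_piD //; apply: SZ.
Qed.

Lemma quot_pi_eq0 x : S x -> quot_pi x = 0 <-> L x.
Proof. by move=> Sx; rewrite (quot_pi_eq Sx (subspace0 S_sub)) subr0. Qed.

End SubspaceQuotient.

Definition surjective (X Y : Type) (f : X -> Y) := forall y, exists x, f x = y.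

Lemma surjective_comp (X Y Z : Type) (f : X -> Y) (g : Y -> Z) :
  surjective f -> surjective g -> surjective (fun x => g (f x)).
Proof. by move=> fS gS z; have [y <-] := gS z; have [x <-] := fS y; exists x. Qed.

Section Modules.
Variables (A : lmodType CC) (mul : A -> A -> A).

Definition retract (X Y : lmodType CC) (aX : A -> X -> X) (aY : A -> Y -> Y) :=
  exists s r, [/\ is_modmap aX aY s, is_modmap aY aX r & forall x, r (s x) = x].

Definition generates (X : lmodType CC) (aX : A -> X -> X) :=
  forall (N : lmodType CC) (aN : A -> N -> N), is_lmodule mul aN -> coherent aN ->
    exists (m : nat) (f : {ffun 'I_m -> X} -> N),
      is_modmap (dsum_act aX m) aN f /\ surjective f.

Section Maps.
Variables (X Y Z : lmodType CC) (aX : A -> X -> X) (aY : A -> Y -> Y) (aZ : A -> Z -> Z).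

Lemma modmap_linear f : is_modmap aX aY f -> linear f.
Proof. by case. Qed.

Lemma modmap_id : is_modmap aX aX id.
Proof. by []. Qed.

Lemma modmap_comp f g :
  is_modmap aX aY f -> is_modmap aY aZ g -> is_modmap aX aZ (fun x => g (f x)).
Proof. by move=> [f_lin fA] [g_lin gA]; split=> [k x y|a x]; rewrite ?f_lin ?g_lin ?fA ?gA. Qed.

Lemma act_linear a : is_lmodule mul aX -> linear (aX a).
Proof. by case=> _ _ aX_lin k x y; rewrite aX_lin. Qed.

End Maps.

Section Transfer.
Variables (X Y Z : lmodType CC) (aX : A -> X -> X) (aY : A -> Y -> Y) (aZ : A -> Z -> Z).

Lemma quasicoherent_surjective f :
  quasicoherent aX -> is_modmap aX aY f -> surjective f -> quasicoherent aY.
Proof.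
move=> qX [_ fA] fS y; have [x <-] := fS y; have [a ax] := qX x.
by exists a; rewrite -fA ax.
Qed.

Lemma fin_gen_surjective f :
  fin_gen aX -> is_modmap aX aY f -> surjective f -> fin_gen aY.
Proof.
move=> [k [x xgen]] [f_lin fA] fS; exists k, (fun l => f (x l)) => y.
have [z <-] := fS y; have [c [a ->]] := xgen z; exists c, a.
rewrite (linear_fun_sum f_lin); apply: eq_bigr => l _.
by rewrite (linear_funD f_lin) (linear_funZ f_lin) fA.
Qed.

Lemma coherent_surjective f :
  coherent aX -> is_modmap aX aY f -> surjective f -> coherent aY.
Proof.
move=> [qX fX] fM fS.
by split; [exact: quasicoherent_surjective fM fS | exact: fin_gen_surjective fM fS].
Qed.

Lemma projective_retract : projective_mod mul aY -> retract aX aY -> projective_mod mul aX.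
Proof.
move=> pY [s [r [sM rM rs]]] V W aV aW lV lW f fM fS g gM.
have [h [hM fh]] := pY V W aV aW lV lW f fM fS _ (modmap_comp rM gM).
by exists (fun x => h (s x)); split=> [|x]; [exact: modmap_comp sM hM | rewrite fh rs].
Qed.

Lemma projective_split f : projective_mod mul aY -> is_lmodule mul aX ->
  is_lmodule mul aY -> is_modmap aX aY f -> surjective f ->
  exists s, is_modmap aY aX s /\ forall y, f (s y) = y.
Proof. by move=> pY lX lY fM fS; apply: pY _ _ _ _ lX lY f fM fS id (modmap_id aY). Qed.

Lemma fin_gen_fintype (T : finType) (x : T -> X) :
  (forall y, exists (c : T -> CC) (a : T -> A),
      y = \sum_t (c t *: x t + aX (a t) (x t))) -> fin_gen aX.
Proof.
move=> xgen; exists #|T|, (fun l => x (enum_val l)) => y.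
have [c [a ->]] := xgen y; exists (fun l => c (enum_val l)), (fun l => a (enum_val l)).
rewrite -(big_enum_val (A := T) (fun t => c t *: x t + aX (a t) (x t))).
by apply: eq_bigl => t; rewrite inE.
Qed.

Lemma modmap_dsum_sum k (f : 'I_k -> X -> Y) : is_lmodule mul aY ->
  (forall j, is_modmap aX aY (f j)) ->
  is_modmap (dsum_act aX k) aY (fun u => \sum_j f j (u j)).
Proof.
move=> lY fM; split=> [c u v|a u].
  rewrite scaler_sumr -big_split /=; apply: eq_bigr => j _.
  by rewrite !ffunE (modmap_linear (fM j)).
rewrite (linear_fun_sum (act_linear a lY)); apply: eq_bigr => j _.
by rewrite ffunE; case: (fM j) => _ ->.
Qed.

Lemma retract_trans : retract aX aY -> retract aY aZ -> retract aX aZ.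
Proof.
move=> [s [r [sM rM rs]]] [s' [r' [sM' rM' rs']]].
exists (fun x => s' (s x)), (fun z => r (r' z)).
by split=> [||x]; [exact: modmap_comp sM sM' | exact: modmap_comp rM' rM | rewrite rs' rs].
Qed.

Lemma dsum_surjective a b (g : {ffun 'I_a -> X} -> Y) :
  is_modmap (dsum_act aX a) aY g -> surjective g ->
  exists c (h : {ffun 'I_c -> X} -> {ffun 'I_b -> Y}),
    is_modmap (dsum_act aX c) (dsum_act aY b) h /\ surjective h.
Proof.
move=> [g_lin gA] gS; exists #|{: 'I_b * 'I_a}|.
exists (fun u => [ffun i => g [ffun j => u (enum_rank (i, j))]]); split; first split.
- move=> k u v; apply/ffunP => i; rewrite !ffunE -g_lin.
  by congr g; apply/ffunP => j; rewrite !ffunE.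
- move=> a' u; apply/ffunP => i; rewrite !ffunE -gA.
  by congr g; apply/ffunP => j; rewrite !ffunE.
- move=> y; have /choice [x xP] := fun i => gS (y i).
  exists [ffun t => x (enum_val t).1 (enum_val t).2].
  by apply/ffunP => i; rewrite ffunE -xP; congr g; apply/ffunP => j; rewrite !ffunE enum_rankK.
Qed.

End Transfer.

Section DirectSum.
Variables (G : lmodType CC) (aG : A -> G -> G).
Hypothesis G_mod : is_lmodule mul aG.

Lemma dsum_lmodule n : is_lmodule mul (dsum_act aG n).
Proof.
case: G_mod => aM aDl aDr.
by split=> *; apply/ffunP => i; rewrite !ffunE ?aM ?aDl ?aDr.
Qed.

Definition dsum_inj n (i : 'I_n) (y : G) : {ffun 'I_n -> G} :=
  [ffun j => if j == i then y else 0].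

Lemma modmap_dsum_inj n i : is_modmap aG (dsum_act aG n) (dsum_inj i).
Proof.
split=> [k x y|a x]; apply/ffunP => j; rewrite !ffunE; case: eqP => // _.
  by rewrite scaler0 addr0.
by rewrite (linear_fun0 (act_linear a G_mod)).
Qed.

Lemma modmap_dsum_proj n i : is_modmap (dsum_act aG n) aG (fun x => x i).
Proof. by split=> [k x y|a x]; rewrite !ffunE. Qed.

Lemma sum_dsum_inj n (x : {ffun 'I_n -> G}) : \sum_i dsum_inj i (x i) = x.
Proof.
apply/ffunP => j; rewrite sum_ffunE (bigD1 j) //= big1 => [|i /negbTE ij].
  by rewrite ffunE eqxx addr0.
by rewrite ffunE eq_sym ij.
Qed.

Lemma projective_dsum n : projective_mod mul aG -> projective_mod mul (dsum_act aG n).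
Proof.
move=> pG X Y aX aY lX lY f fM fS g gM.
have /choice [h hP] : forall i : 'I_n, exists h,
    is_modmap aG aX h /\ forall y, f (h y) = g (dsum_inj i y).
  by move=> i; apply: pG lX lY f fM fS _ (modmap_comp (modmap_dsum_inj i) gM).
exists (fun x : {ffun 'I_n -> G} => \sum_i h i (x i)); split.
  by apply: modmap_dsum_sum lX _ => i; case: (hP i).
move=> x; rewrite (linear_fun_sum (modmap_linear fM)) -{2}(sum_dsum_inj x).
rewrite (linear_fun_sum (modmap_linear gM)); apply: eq_bigr => i _.
by case: (hP i) => _ ->.
Qed.

Lemma fin_gen_dsum n : fin_gen aG -> fin_gen (dsum_act aG n).
Proof.
move=> [k [x xgen]].
apply: (@fin_gen_fintype _ _ ('I_n * 'I_k)%type (fun t => dsum_inj t.1 (x t.2))) => y.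
have /choice [ca caP] : forall i, exists ca : ('I_k -> CC) * ('I_k -> A),
    y i = \sum_l (ca.1 l *: x l + aG (ca.2 l) (x l)).
  by move=> i; have [c [a E]] := xgen (y i); exists (c, a).
exists (fun t => (ca t.1).1 t.2), (fun t => (ca t.1).2 t.2).
rewrite -(pair_big xpredT xpredT (fun i l => (ca i).1 l *: dsum_inj i (x l) +
   dsum_act aG n ((ca i).2 l) (dsum_inj i (x l)))) /=.
rewrite -{1}(sum_dsum_inj y); apply: eq_bigr => i _.
have [inj_lin injA] := modmap_dsum_inj (n := n) i.
rewrite caP (linear_fun_sum inj_lin); apply: eq_bigr => l _.
by rewrite (linear_funD inj_lin) (linear_funZ inj_lin) injA.
Qed.

Lemma dsum_retractS n : retract (dsum_act aG n) (dsum_act aG n.+1).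
Proof.
exists (fun x : {ffun 'I_n -> G} => [ffun i => oapp x 0 (unlift ord_max i)]).
exists (fun x : {ffun 'I_n.+1 -> G} => [ffun i => x (lift ord_max i)]).
split=> [||x]; last by apply/ffunP => i; rewrite !ffunE liftK.
- split=> [k x y|a x]; apply/ffunP => i; rewrite !ffunE.
    by case: unlift => [j|] /=; rewrite ?ffunE ?scaler0 ?addr0.
  by case: unlift => [j|] /=; rewrite ?ffunE ?(linear_fun0 (act_linear a G_mod)).
- by split=> [k x y|a x]; apply/ffunP => i; rewrite !ffunE.
Qed.

Lemma projective_retract_dsum (X : lmodType CC) (aX : A -> X -> X) :
  generates aG -> is_lmodule mul aX -> coherent aX -> projective_mod mul aX ->
  exists k, retract aX (dsum_act aG k).
Proof.
move=> genG lX cX pX; have [k [f [fM fS]]] := genG X aX lX cX.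
have [s [sM fs]] := projective_split pX (dsum_lmodule k) lX fM fS.
by exists k, s, f.
Qed.

Lemma generates_surjective (M : lmodType CC) (aM : A -> M -> M) k
    (g : {ffun 'I_k -> M} -> G) :
  generates aG -> is_modmap (dsum_act aM k) aG g -> surjective g -> generates aM.
Proof.
move=> genG gM gS N aN lN cN; have [m [f [fM fS]]] := genG N aN lN cN.
have [c [h [hM hS]]] := dsum_surjective m gM gS.
by exists c, (fun u => f (h u)); split; [exact: modmap_comp hM fM | exact: surjective_comp].
Qed.

End DirectSum.
End Modules.

Section LocalUnits.
Variables (A : lmodType CC) (mul : A -> A -> A).
Hypothesis A_alg : is_nualg mul.

Let mulA a b c : mul a (mul b c) = mul (mul a b) c.
Proof. by case: A_alg. Qed.
Let mull_lin z : linear (mul^~ z).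
Proof. by case: A_alg => _ mulDl _ k x y; rewrite mulDl. Qed.
Let mulr_lin z : linear (mul z).
Proof. by case: A_alg => _ _ mulDr k x y; rewrite mulDr. Qed.

Section OrthogonalIdempotents.
Variables (I : Type) (e : I -> A).
Hypotheses (e_idem : forall i, mul (e i) (e i) = e i)
  (e_orth : forall i j, i <> j -> mul (e i) (e j) = 0)
  (e_span : forall x, exists s : seq (I * I * A),
     x = \sum_(t <- s) mul (mul (e t.1.1) t.2) (e t.1.2)).

Definition left_unit_on (u : A) (l : seq I) := forall i, List.In i l -> mul u (e i) = e i.

(* [u + e i - u e i] is a left unit for [e i] and, by orthogonality, still for
   the [e j] fixed by [u]. *)
Lemma exists_left_unit_on l : exists u, left_unit_on u l.
Proof.
elim: l => [|i l [u uP]]; first by exists 0.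
have ui : mul (u + e i - mul u (e i)) (e i) = e i.
  rewrite (linear_funB (mull_lin _)) (linear_funD (mull_lin _)) e_idem -mulA.
  by rewrite e_idem addrAC subrr add0r.
exists (u + e i - mul u (e i)) => j /= [<- //|jl].
have [<- //|ij] := pselect (i = j).
rewrite (linear_funB (mull_lin _)) (linear_funD (mull_lin _)) uP // -mulA e_orth //.
by rewrite (linear_fun0 (mulr_lin _)) addr0 subr0.
Qed.

Lemma left_unit_on_sum u (s : seq (I * I * A)) :
  left_unit_on u (map (fun t => t.1.1) s) ->
  mul u (\sum_(t <- s) mul (mul (e t.1.1) t.2) (e t.1.2)) =
  \sum_(t <- s) mul (mul (e t.1.1) t.2) (e t.1.2).
Proof.
elim: s => [|t s IHs] uP; first by rewrite big_nil (linear_fun0 (mulr_lin _)).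
rewrite !big_cons (linear_funD (mulr_lin _)) IHs => [|i si]; last by apply: uP; right.
by rewrite !mulA uP //; left.
Qed.

Lemma left_unit_on_span k (a : 'I_k -> A) :
  exists l, forall u, left_unit_on u l -> forall j, mul u (a j) = a j.
Proof.
elim: k a => [|k IHk] a; first by exists [::] => u _ [].
have [l' l'P] := IHk (fun j => a (lift ord0 j)).
have [s Es] := e_span (a ord0).
exists (map (fun t => t.1.1) s ++ l') => u uP j.
have [j' ->|->] := unliftP ord0 j.
  by apply: l'P => i il'; apply/uP/List.in_or_app; right.
by rewrite Es left_unit_on_sum // => i si; apply/uP/List.in_or_app; left.
Qed.

End OrthogonalIdempotents.

Lemma AUF_local_units : is_AUF mul ->
  forall k (a : 'I_k -> A), exists u, forall j, mul u (a j) = a j.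
Proof.
move=> [I [e [e_idem e_orth _ e_span]]] k a.
have [l lP] := left_unit_on_span e_span a.
have [u uP] := exists_left_unit_on e_idem e_orth l.
by exists u; apply: lP.
Qed.

Section CoherentSums.
Hypothesis A_AUF : is_AUF mul.
Variables (G : lmodType CC) (aG : A -> G -> G).
Hypothesis G_mod : is_lmodule mul aG.

Lemma quasicoherent_dsum n : quasicoherent aG -> quasicoherent (dsum_act aG n).
Proof.
move=> qG x; have /choice [a aP] := fun i => qG (x i).
have [u uP] := AUF_local_units A_AUF a.
exists u; apply/ffunP => i; rewrite ffunE.
by case: G_mod => actM _ _; rewrite -{1}aP -actM uP aP.
Qed.

Lemma coherent_dsum n : coherent aG -> coherent (dsum_act aG n).
Proof. by case=> qG fG; split; [exact: quasicoherent_dsum | exact: fin_gen_dsum G_mod _ fG]. Qed.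

End CoherentSums.
End LocalUnits.

Section EndomorphismRing.
Variables (A : lmodType CC) (mul : A -> A -> A) (G : lmodType CC) (aG : A -> G -> G).
Hypothesis G_mod : is_lmodule mul aG.
Variable n : nat.
Local Notation P := {ffun 'I_n -> G}.
Local Notation End := (is_End aG (n := n)).

Lemma End_linear b : End b -> linear b.
Proof. by case. Qed.

Lemma End_id : End id.
Proof. by []. Qed.

Lemma End_comp b c : End b -> End c -> End (fun z => c (b z)).
Proof. exact: modmap_comp. Qed.

Lemma End_subspace : subspace End.
Proof.
have dsum_lin a := act_linear a (dsum_lmodule G_mod n).
split=> [|k b c [b_lin bA] [c_lin cA]].
  by split=> [k x y|a x]; rewrite /= ?scaler0 ?addr0 // (linear_fun0 (dsum_lin a)).
split=> [k' x y|a x]; rewrite !fctE; last by rewrite bA cA dsum_lin.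
by rewrite b_lin c_lin !scalerDr !scalerA [k * _]mulrC addrACA.
Qed.

Section TwoSidedIdeal.
Variable p : P -> P.
Hypothesis p_End : End p.

Definition in_BpB (x : P -> P) := exists k (X Y : 'I_k -> P -> P),
  (forall j, End (X j) /\ End (Y j)) /\ forall z, x z = \sum_j X j (p (Y j z)).

Lemma BpB_End x : in_BpB x -> End x.
Proof.
move=> [k [X [Y [XY_End xE]]]]; have -> : x = \sum_j (fun z => X j (p (Y j z))).
  by rewrite fct_sumE; apply/funext.
apply: (subspace_sum End_subspace) => j _; have [X_End Y_End] := XY_End j.
by apply: End_comp X_End; apply: End_comp p_End.
Qed.

Lemma BpB_subspace : subspace in_BpB.
Proof.
split=> [|c x y [k1 [X1 [Y1 [XY1 E1]]]] [k2 [X2 [Y2 [XY2 E2]]]]].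
  by exists 0%N, (fun _ => 0), (fun _ => 0); split=> [[]|z]; rewrite ?big_ord0.
pose glue T (f1 : 'I_k1 -> T) (f2 : 'I_k2 -> T) j :=
  match fintype.split j with inl j1 => f1 j1 | inr j2 => f2 j2 end.
exists (k1 + k2)%N, (glue _ (fun j => c *: X1 j) X2), (glue _ Y1 Y2); split.
  move=> j; rewrite /glue; case: (fintype.split j) => [j1|j2]; last exact: XY2.
  have [X1_End Y1_End] := XY1 j1; split=> //.
  by rewrite -[_ *: _]addr0; apply: (proj2 End_subspace) => //; apply: (proj1 End_subspace).
move=> z; rewrite !fctE E1 E2 big_split_ord scaler_sumr /glue; congr (_ + _).
  by apply: eq_bigr => j _; rewrite (unsplitK (inl _ j)) fctE.
by apply: eq_bigr => j _; rewrite (unsplitK (inr _ j)).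
Qed.

Lemma BpB_compr x c : in_BpB x -> End c -> in_BpB (fun z => x (c z)).
Proof.
move=> [k [X [Y [XY_End xE]]]] c_End; exists k, X, (fun j z => Y j (c z)).
by split=> [j|z]; [have [? ?] := XY_End j; split=> //; apply: End_comp | apply: xE].
Qed.

Lemma BpB_sandwich X Y : End X -> End Y -> in_BpB (fun z => X (p (Y z))).
Proof.
by move=> X_End Y_End; exists 1%N, (fun _ => X), (fun _ => Y); split=> // z; rewrite big_ord1.
Qed.

End TwoSidedIdeal.

Section LeftIdealBp.
Variable p : P -> P.
Hypothesis p_End : End p.

Lemma Bp_End x : in_Bp aG p x -> End x.
Proof.
move=> [b [b_End xE]]; have -> : x = fun z => p (b z) by apply/funext.
exact: End_comp.
Qed.

Lemma Bp_p : in_Bp aG p p.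
Proof. by exists id. Qed.

Lemma Bp_compr x b : in_Bp aG p x -> End b -> in_Bp aG p (fun z => x (b z)).
Proof. by move=> [c [c_End xE]] b_End; exists (fun z => c (b z)); split; [apply: End_comp|]. Qed.

Lemma Bp_subspace : subspace (in_Bp aG p).
Proof.
split=> [|k x y [b [b_End xE]] [c [c_End yE]]].
  exists 0; split=> [|z]; first exact: (proj1 End_subspace).
  by rewrite (linear_fun0 (End_linear p_End)).
exists (k *: b + c); split; first exact: (proj2 End_subspace).
by move=> z; rewrite !fctE xE yE (End_linear p_End).
Qed.

End LeftIdealBp.

Section BModule.
Variables (V : lmodType CC) (bact : (P -> P) -> V -> V).
Hypothesis V_mod : is_Bmodule aG bact.

Lemma Bact_linear b : End b -> linear (bact b).
Proof. by move=> b_End k x y; case: V_mod => Bact_lin _ _ _; apply: Bact_lin. Qed.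

Lemma Bact_comp b c v : End b -> End c -> bact (fun z => c (b z)) v = bact b (bact c v).
Proof. by move=> b_End c_End; case: V_mod => _ _ Bact_mul _; apply: Bact_mul. Qed.

Lemma Bact0 v : bact (fun _ => 0) v = 0.
Proof.
case: V_mod => _ Bact_linl _ _; have End0 := proj1 End_subspace.
have := Bact_linl _ _ End0 End0 1 v; rewrite scale1r.
have -> : (fun x : P => 1 *: (0 : P) + 0) = (fun _ => 0).
  by apply/funext => x; rewrite scale1r addr0.
by move/(congr1 (fun w => w - bact (fun _ => 0) v)); rewrite subrr addrK => <-.
Qed.

Lemma Bact_sum I (r : seq I) (B : I -> P -> P) v : (forall i, End (B i)) ->
  bact (fun z => \sum_(i <- r) B i z) v = \sum_(i <- r) bact (B i) v.
Proof.
move=> B_End; elim: r => [|i r IHr].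
  by rewrite big_nil -(Bact0 v); congr bact; apply/funext => z; rewrite big_nil.
have sum_End : End (fun z => \sum_(j <- r) B j z).
  by rewrite -fct_sumE; apply: (subspace_sum End_subspace) => j _.
case: V_mod => _ Bact_linl _ _; rewrite big_cons -IHr -[bact (B i) v]scale1r -Bact_linl //.
by congr bact; apply/funext => z; rewrite big_cons scale1r.
Qed.

Section Annihilator.
Variable p : P -> P.
Hypotheses (p_End : End p) (p_annihilates : forall v, bact p v = 0).

Lemma full_annihilator_eq0 (v : V) : in_BpB p id -> v = 0.
Proof.
move=> [k [X [Y [XY_End idE]]]].
have -> : v = bact (fun z => \sum_j X j (p (Y j z))) v.
  by case: V_mod => _ _ _ Bact_id; rewrite -{1}[v]Bact_id; congr bact; apply/funext.
rewrite Bact_sum => [|j]; last first.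
  by have [X_End Y_End] := XY_End j; apply: End_comp Y_End (End_comp p_End X_End).
apply: big1 => j _; have [X_End Y_End] := XY_End j.
rewrite (Bact_comp _ Y_End (End_comp p_End X_End)) (Bact_comp _ p_End X_End).
by rewrite p_annihilates (linear_fun0 (Bact_linear Y_End)).
Qed.

Lemma Bquotient_annihilator_eq0 (v : V) : (forall x, p (p x) = p x) ->
  Bquotient_of_Bp aG p bact -> v = 0.
Proof.
move=> p_idem [phi [_ phiB phiS]].
have phi_p : phi p = 0.
  have := phiB p p (Bp_p p) p_End; rewrite p_annihilates.
  by have -> : (fun z => p (p z)) = p by apply/funext.
have [x [[b [b_End xE]] <-]] := phiS v.
have -> : x = fun z => p (b z) by apply/funext.
by rewrite phiB ?phi_p ?(linear_fun0 (Bact_linear b_End)) //; apply: Bp_p.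
Qed.

End Annihilator.

Lemma orbit_Bquotient p v : End p -> Birreducible aG bact -> bact p v <> 0 ->
  Bquotient_of_Bp aG p bact.
Proof.
move=> p_End [_ V_irr] pv.
case: V_mod => _ Bact_linl _ _.
exists (fun x => bact x v); split.
- move=> x y k x_Bp y_Bp; exact: Bact_linl (Bp_End p_End x_Bp) (Bp_End p_End y_Bp) k v.
- move=> x b x_Bp b_End; exact: Bact_comp v b_End (Bp_End p_End x_Bp).
have orbitS : Bsubmodule aG bact (fun w => exists x, in_Bp aG p x /\ bact x v = w).
  split.
  - exists (fun _ => 0); split; last exact: Bact0.
    exact: (subspace0 (Bp_subspace p_End)).
  - move=> k _ _ [x [x_Bp <-]] [y [y_Bp <-]].
    exists (k *: x + y); split; first exact: (proj2 (Bp_subspace p_End)).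
    exact: Bact_linl (Bp_End p_End x_Bp) (Bp_End p_End y_Bp) k v.
  - move=> b _ b_End [x [x_Bp <-]]; exists (fun z => x (b z)); split.
      exact: Bp_compr.
    exact: Bact_comp v b_End (Bp_End p_End x_Bp).
move=> w; have := V_irr _ orbitS _ w.
case=> [|x [x_Bp <-]]; last by exists x.
by exists (bact p v); split=> //; exists p; split=> //; apply: Bp_p.
Qed.

End BModule.

Lemma full_generating p : End p -> (forall x, p (p x) = p x) -> in_BpB p id ->
  generating_idempotent aG p.
Proof.
move=> p_End p_idem p_full; split=> // V bact V_mod V_irr.
have [[v pv]|p_ann] := pselect (exists v, bact p v <> 0).
  exact (orbit_Bquotient V_mod p_End V_irr pv).
have [[v0 v0_neq0] _] := V_irr; exfalso; apply: v0_neq0.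
apply: (full_annihilator_eq0 V_mod p_End) p_full => v.
by apply: contra_notP p_ann => pv; exists v.
Qed.

Local Open Scope classical_set_scope.

Definition Bleft_ideal (X : set (P -> P)) :=
  [/\ forall x, X x -> End x,
      forall (k : CC) x y, X x -> X y -> X (k *: x + y) &
      forall x c, X x -> End c -> X (fun z => x (c z))].

Definition maximal_Bleft_ideal (m : set (P -> P)) :=
  [/\ Bleft_ideal m, m 0, ~ m id & forall X, Bleft_ideal X -> m `<` X -> X id].

Lemma exists_maximal_Bleft_ideal J : Bleft_ideal J -> J 0 -> ~ J id ->
  exists2 m, maximal_Bleft_ideal m & J `<=` m.
Proof.
move=> J_ideal J0 J_id.
(* The [set0] alternative makes the union of the empty chain admissible. *)
pose proper_above X := [/\ Bleft_ideal X, ~ X id & X = set0 \/ J `<=` X].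
have chain_ub (C : set (set (P -> P))) : C `<=` proper_above ->
    total_on C subset -> proper_above (\bigcup_(X in C) X).
  move=> C_proper C_total; split.
  - split.
    + by move=> x [X CX Xx]; have [[X_End _ _] _ _] := C_proper X CX; apply: X_End.
    + move=> k x y [X1 CX1 X1x] [X2 CX2 X2y].
      have [X12|X21] := C_total X1 X2 CX1 CX2.
        exists X2 => //; have [[_ X2_lin _] _ _] := C_proper X2 CX2.
        by apply: X2_lin => //; apply: X12.
      exists X1 => //; have [[_ X1_lin _] _ _] := C_proper X1 CX1.
      by apply: X1_lin => //; apply: X21.
    + move=> x c [X CX Xx] c_End; exists X => //.
      by have [[_ _ X_comp] _ _] := C_proper X CX; apply: X_comp.
  - by move=> [X CX Xid]; have [_ X_id _] := C_proper X CX; apply: X_id.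
  - have [[X CX JX]|noJ] := pselect (exists2 X, C X & J `<=` X).
      by right=> x Jx; exists X => //; apply: JX.
    left; apply/seteqP; split=> [x [X CX Xx]|//].
    have [_ _ [X0|JX]] := C_proper X CX; first by rewrite X0 in Xx.
    by apply: noJ; exists X.
have [m [[m_ideal m_id [m0|Jm]] m_max]] := Zorn_bigcup chain_ub.
  by exfalso; apply: (m_max J); [rewrite m0; split=> // /(_ 0 J0) | split=> //; right].
exists m => //; split=> // [|X X_ideal mX]; first exact: Jm.
have [//|X_id] := pselect (X id); exfalso; apply: (m_max X mX).
by split=> //; right=> x /Jm; apply: (properW mX).
Qed.

Lemma maximal_Bleft_ideal_unit m b : maximal_Bleft_ideal m -> End b -> ~ m b ->
  exists a c, [/\ m a, End c & id = a + (fun z => b (c z))].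
Proof.
move=> [[m_End m_lin m_comp] m0 _ m_max] b_End m_b.
pose X x := exists a c, [/\ m a, End c & x = a + (fun z => b (c z))].
apply: (m_max X); last split.
- split.
  + move=> _ [a [c [ma c_End ->]]].
    by rewrite -[a]scale1r; apply: (proj2 End_subspace); [apply: m_End | apply: End_comp].
  + move=> k _ _ [a1 [c1 [ma1 c1_End ->]]] [a2 [c2 [ma2 c2_End ->]]].
    exists (k *: a1 + a2), (k *: c1 + c2); split; [exact: m_lin | exact: (proj2 End_subspace) |].
    apply/funext => z; rewrite !fctE (End_linear b_End).
    by rewrite scalerDr addrACA.
  + move=> _ d [a [c [ma c_End ->]]] d_End.
    exists (fun z => a (d z)), (fun z => c (d z)); split; [exact: m_comp | exact: End_comp |].
    by apply/funext => z; rewrite !fctE.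
- move=> x mx; exists x, 0; split=> //; first exact: (proj1 End_subspace).
  by apply/funext => z; rewrite !fctE (linear_fun0 (End_linear b_End)) addr0.
- move=> Xm; apply: m_b; apply: Xm; exists 0, id; split=> //.
  by apply/funext => z; rewrite !fctE add0r.
Qed.

Lemma maximal_Bleft_ideal_nested m : maximal_Bleft_ideal m -> nested_subspaces End m.
Proof. by case=> [[m_End m_lin _] m0 _ _]; split; [exact: End_subspace | split |]. Qed.

Section MaximalQuotient.
Variable m : set (P -> P).
Hypothesis m_max : maximal_Bleft_ideal m.
Local Notation Em := (maximal_Bleft_ideal_nested m_max).

Definition Bquot_act (b : P -> P) : quot Em -> quot Em :=
  quot_map (SL := Em) (fun x z => x (b z)).

Lemma Bquot_act_pi b x : End b -> End x ->
  Bquot_act b (quot_pi Em x) = quot_pi Em (fun z => x (b z)).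
Proof.
have [[_ _ m_comp] _ _ _] := m_max.
move=> b_End x_End.
have T_lin : linear (fun (y : P -> P) z => y (b z)).
  by move=> k y y'; apply/funext => z; rewrite !fctE.
apply: (quot_map_pi Em T_lin _ _ x_End) => [y|y my]; first exact: End_comp.
exact: m_comp.
Qed.

Lemma Bquot_module : is_Bmodule aG Bquot_act.
Proof.
have [End0 End_lin] := End_subspace.
split=> [b b_End k v w|b1 b2 b1_End b2_End k v|b1 b2 b1_End b2_End v|v].
- have [x x_End <-] := quot_surj v; have [y y_End <-] := quot_surj w.
  rewrite -(quot_pi_lin Em k x_End y_End) !Bquot_act_pi //; last exact: End_lin.
  rewrite -(quot_pi_lin Em k (End_comp b_End x_End) (End_comp b_End y_End)).
  by congr quot_pi; apply/funext => z; rewrite !fctE.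
- have [x x_End <-] := quot_surj v.
  rewrite !Bquot_act_pi //; last exact: End_lin.
  rewrite -(quot_pi_lin Em k (End_comp b1_End x_End) (End_comp b2_End x_End)).
  by congr quot_pi; apply/funext => z; rewrite !fctE (End_linear x_End).
- by have [x x_End <-] := quot_surj v; rewrite !Bquot_act_pi //; apply: End_comp.
- by have [x x_End <-] := quot_surj v; rewrite Bquot_act_pi.
Qed.

Lemma Bquot_irreducible : Birreducible aG Bquot_act.
Proof.
have [_ _ m_id _] := m_max.
split=> [|S [_ _ S_act] [v0 [S_v0 v0_neq0]] w].
  by exists (quot_pi Em id) => /(quot_pi_eq0 Em End_id).
have [b b_End v0E] := quot_surj v0.
have m_b : ~ m b by move=> mb; apply: v0_neq0; rewrite -v0E; apply/(quot_pi_eq0 Em b_End).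
have [a [c [ma c_End idE]]] := maximal_Bleft_ideal_unit m_max b_End m_b.
have S_id : S (quot_pi Em id).
  have -> : quot_pi Em id = Bquot_act c v0.
    rewrite -v0E Bquot_act_pi //; apply/(quot_pi_eq Em End_id); first exact: End_comp.
    by rewrite idE addrK.
  exact: S_act.
have [x x_End <-] := quot_surj w.
have -> : quot_pi Em x = Bquot_act x (quot_pi Em id) by rewrite Bquot_act_pi.
exact: S_act.
Qed.

End MaximalQuotient.

Lemma generating_full p : generating_idempotent aG p -> in_BpB p id.
Proof.
move=> [p_End p_idem p_gen]; have [//|p_not_full] := pselect (in_BpB p id).
have BpB_ideal : Bleft_ideal (in_BpB p).
  split=> [x|k x y|x c]; [exact: BpB_End | exact: (proj2 (BpB_subspace p)) | exact: BpB_compr].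
have [m m_max BpB_m] :=
  exists_maximal_Bleft_ideal BpB_ideal (subspace0 (BpB_subspace p)) p_not_full.
have V_mod := Bquot_module m_max; have V_irr := Bquot_irreducible m_max.
have p_ann v : Bquot_act (m_max := m_max) p v = 0.
  have [x x_End <-] := quot_surj v; rewrite Bquot_act_pi //.
  apply/quot_pi_eq0; first exact: End_comp.
  by apply: BpB_m; apply: (BpB_sandwich p x_End End_id).
have [[v0 v0_neq0] _] := V_irr; exfalso; apply: v0_neq0.
exact: (Bquotient_annihilator_eq0 V_mod p_End p_ann v0 p_idem (p_gen _ _ V_mod V_irr)).
Qed.

End EndomorphismRing.

Section IdempotentImage.
Variables (A : lmodType CC) (mul : A -> A -> A).
Variables (G : lmodType CC) (aG : A -> G -> G) (M : lmodType CC) (aM : A -> M -> M).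
Hypotheses (G_mod : is_lmodule mul aG) (M_mod : is_lmodule mul aM).
Variable n : nat.
Local Notation P := {ffun 'I_n -> G}.

Lemma image_retract p psi : is_End aG p -> (forall x, p (p x) = p x) ->
  is_modmap aM (dsum_act aG n) psi -> injective psi ->
  (forall y, (exists m, psi m = y) <-> (exists xi, y = p xi)) ->
  exists r, [/\ is_modmap (dsum_act aG n) aM r, forall m, r (psi m) = m &
                forall x, psi (r x) = p x].
Proof.
move=> [p_lin pA] p_idem [psi_lin psiA] psi_inj psi_im.
have /choice [r rP] : forall x, exists m, psi m = p x by move=> x; apply/psi_im; exists x.
exists r; split=> [|m|]; last exact: rP.
- by split=> [k x y|a x]; apply: psi_inj; rewrite ?psi_lin ?psiA !rP ?p_lin ?pA.
- have [xi mE] : exists xi, psi m = p xi by apply/psi_im; exists m.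
  by apply: psi_inj; rewrite rP mE p_idem.
Qed.

Section Retract.
Variables (s : M -> P) (r : P -> M).
Hypotheses (sM : is_modmap aM (dsum_act aG n) s) (rM : is_modmap (dsum_act aG n) aM r)
  (rs : forall m, r (s m) = m).

Lemma retract_full k : retract aG (dsum_act aM k) -> in_BpB aG (fun x => s (r x)) id.
Proof.
move=> [s0 [r0 [s0M r0M r0s0]]].
pose X (ij : 'I_n * 'I_k) w := dsum_inj ij.1 (r0 (dsum_inj ij.2 (r w))).
pose Y (ij : 'I_n * 'I_k) (z : P) := s (s0 (z ij.1) ij.2).
have -> : id = \sum_ij (fun z => X ij (s (r (Y ij z)))).
  apply/funext => z; rewrite fct_sumE /=.
  rewrite -(pair_big xpredT xpredT (fun i j => X (i, j) (s (r (Y (i, j) z))))) /=.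
  rewrite -{1}(sum_dsum_inj z); apply: eq_bigr => i _; rewrite /X /Y /=.
  under eq_bigr do rewrite !rs.
  rewrite -(linear_fun_sum (modmap_linear (modmap_comp r0M (modmap_dsum_inj G_mod i)))).
  by rewrite sum_dsum_inj r0s0.
apply: (subspace_sum (BpB_subspace G_mod _)) => ij _; apply: BpB_sandwich.
  apply: modmap_comp (modmap_dsum_inj G_mod ij.1); apply: modmap_comp r0M.
  exact: modmap_comp rM (modmap_dsum_inj M_mod ij.2).
apply: modmap_comp sM; apply: modmap_comp (modmap_dsum_proj aM ij.2).
exact: modmap_comp (modmap_dsum_proj aG ij.1) s0M.
Qed.

Lemma full_surjective p : (forall x, s (r x) = p x) -> in_BpB aG p id -> (0 < n)%N ->
  exists k (g : {ffun 'I_k -> M} -> G), is_modmap (dsum_act aM k) aG g /\ surjective g.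
Proof.
move=> srE [k [X [Y [XY_End idE]]]] n_gt0; pose i0 := Ordinal n_gt0.
exists k, (fun u => (\sum_j X j (s (u j))) i0); split.
  apply: modmap_comp (modmap_dsum_proj aG i0).
  apply: (modmap_dsum_sum (f := fun j m => X j (s m)) (dsum_lmodule G_mod n)) => j.
  exact: modmap_comp sM (XY_End j).1.
move=> y; exists [ffun j => r (Y j (dsum_inj i0 y))].
transitivity (dsum_inj i0 y i0); last by rewrite ffunE eqxx.
have /= idE_y := idE (dsum_inj i0 y); rewrite [in RHS]idE_y.
by congr (_ i0); under eq_bigr do rewrite ffunE srE.
Qed.

End Retract.
End IdempotentImage.

Theorem corollary7p12
  (A : lmodType CC) (mul : A -> A -> A)
  (HA : is_nualg mul) (HAUF : is_AUF mul)
  (G : lmodType CC) (actG : A -> G -> G)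
  (HG : is_lmodule mul actG) (HGpg : proj_generator mul actG)
  (M : lmodType CC) (actM : A -> M -> M) (HM : is_lmodule mul actM) :
  proj_generator mul actM <->
  exists (n : nat) (p : {ffun 'I_n -> G} -> {ffun 'I_n -> G}),
    [/\ (0 < n)%N, generating_idempotent actG p &
        (* M is isomorphic to G^{+n} . p = { p xi : xi in G^{+n} } *)
        exists psi : M -> {ffun 'I_n -> G},
          [/\ is_modmap actM (dsum_act actG n) psi,
              injective psi &
              forall y, (exists m, psi m = y) <-> (exists xi, y = p xi)]].
Proof.
have [cohG projG genG] := HGpg; split.
- move=> [cohM projM genM].
  have [k MG] := projective_retract_dsum HG genG HM cohM projM.
  have [s [r [sM rM rs]]] := retract_trans MG (dsum_retractS HG k).
  have [l GM] := projective_retract_dsum HM genM HG cohG projG.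
  have p_End : is_End actG (fun x => s (r x)) := modmap_comp rM sM.
  have p_idem x : s (r (s (r x))) = s (r x) by rewrite rs.
  exists k.+1, (fun x => s (r x)); split=> //.
    exact: (full_generating HG p_End p_idem (retract_full HG HM sM rM rs GM)).
  exists s; split=> // [m1 m2 /(congr1 r)|y]; first by rewrite !rs.
  by split=> [[m <-]|[x ->]]; [exists (s m); rewrite rs | exists (r x)].
- move=> [n [p [n_gt0 p_gen [psi [psiM psi_inj psi_im]]]]].
  have [p_End p_idem _] := p_gen.
  have [r [rM rpsi psir]] := image_retract p_End p_idem psiM psi_inj psi_im.
  have r_surj : surjective r by move=> m; exists (psi m).
  have [k [g [gM gS]]] := full_surjective HG psiM psir (generating_full HG p_gen) n_gt0.
  split.
  + exact: coherent_surjective (coherent_dsum HA HAUF HG n cohG) rM r_surj.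
  + by apply: projective_retract (projective_dsum (n := n) HG projG) _; exists psi, r.
  + exact: generates_surjective genG gM gS.
Qed.
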